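(* Let $n=2\ell$ where $\ell\ge3$ is odd. For $0\le k\le n-1$ let $p_k:=\left(1,\cos\frac{2\pi k}{n},\sin\frac{2\pi k}{n}\right)\in\mathbb{R}^3$, and let $X:=(\langle p_k,p_{k'}\rangle)_{0\le k,k'\le n-1}$. Then $X$ is a Gram-Lorentz matrix that is not completely positive; in particular $X$ is completely positive semidefinite but not completely positive.
   Context: The Lorentz cone is $\mathcal{L}_m:=\{(c,x)\in\mathbb{R}\times\mathbb{R}^{m-1}: c\ge\|x\|\}$. A real symmetric $n\times n$ matrix is Gram-Lorentz if it is the Gram matrix of vectors lying in some $\mathcal{L}_m$. An $n\times n$ matrix $X$ is completely positive if $X_{ij}=\langle a_i,a_j\rangle$ for some entrywise nonnegative vectors $a_1,\dots,a_n\in\mathbb{R}^k_+$, and completely positive semidefinite if $X_{ij}=\mathrm{Tr}(P_iP_j)$ for some Hermitian positive semidefinite $d\times d$ matrices $P_1,\dots,P_n$ (some $d\ge1$). *)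

From HB Require Import structures.
From mathcomp Require Import all_boot all_order all_algebra.
From mathcomp Require Import all_classical all_reals.
From mathcomp Require Import complex.
From mathcomp Require Import trigo.
Set Implicit Arguments. Unset Strict Implicit. Unset Printing Implicit Defensive.
Import Order.TTheory GRing.Theory Num.Theory.
Local Open Scope ring_scope.

Definition dotv (R : realType) (m : nat) (u v : 'rV[R]_m) : R :=
  \sum_(i < m) u 0 i * v 0 i.

Definition lorentz_cone (R : realType) (m : nat) (v : 'rV[R]_m.+1) : Prop :=
  Num.sqrt (\sum_(i < m) (v 0 (lift ord0 i)) ^+ 2) <= v 0 ord0.

Definition gram_lorentz (R : realType) (n : nat) (X : 'M[R]_n) : Prop :=
  exists (m : nat) (a : 'I_n -> 'rV[R]_m.+1),
    (forall i, lorentz_cone (a i)) /\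
    (forall i j, X i j = dotv (a i) (a j)).

Definition completely_positive (R : realType) (n : nat) (X : 'M[R]_n) : Prop :=
  exists (k : nat) (a : 'I_n -> 'rV[R]_k),
    (forall i l, 0 <= a i 0 l) /\
    (forall i j, X i j = dotv (a i) (a j)).

Definition adjmx (R : rcfType) (m n : nat) (A : 'M[R[i]]_(m, n)) : 'M[R[i]]_(n, m) :=
  (map_mx Num.conj A)^T.

Definition herm_psd (R : rcfType) (d : nat) (P : 'M[R[i]]_d) : Prop :=
  adjmx P = P /\ forall v : 'cV[R[i]]_d, 0 <= (adjmx v *m P *m v) 0 0.

Definition cpsd (R : realType) (n : nat) (X : 'M[R]_n) : Prop :=
  exists (d : nat) (P : 'I_n -> 'M[R[i]]_d),
    (0 < d)%N /\ (forall i, herm_psd (P i)) /\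
    (forall i j, \tr (P i *m P j) = real_complex R (X i j)).

Definition pk (R : realType) (n : nat) (k : 'I_n) : 'rV[R]_3 :=
  let t := 2 * pi * k%:R / n%:R in
  \row_(j < 3) [:: 1; cos t; sin t]`_j.

Definition Xmat (R : realType) (n : nat) : 'M[R]_n :=
  \matrix_(k < n, k' < n) dotv (pk R k) (pk R k').

From HB Require Import structures.
From mathcomp Require Import all_boot all_order all_algebra.
From mathcomp Require Import all_classical all_reals.
From mathcomp Require Import complex trigo.
From mathcomp Require Import lra ring zify.
Import Order.TTheory GRing.Theory Num.Theory.
Local Open Scope ring_scope.
Set Implicit Arguments. Unset Strict Implicit. Unset Printing Implicit Defensive.

(* The p_k lie on the boundary of the Lorentz cone L_3, and the isometric
   embedding (x0, x1, x2) |-> [[x0 + x2, x1], [x1, x0 - x2]] / sqrt 2 of L_3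
   into the 2 x 2 positive semidefinite matrices turns every Gram-Lorentz
   matrix of vectors of L_3 into a completely positive semidefinite one.
   Suppose X were the Gram matrix of nonnegative vectors a_k.  Families with
   the same Gram matrix satisfy the same linear relations, so with
   c = cos (pi / l) the relations p_0 + p_l = p_1 + p_(l+1) = p_2 + p_(l+2)
   and p_0 + p_2 = (1 + c) p_1 + (1 - c) p_(l+1) hold for the a_k as well.
   Antipodal p_k are orthogonal, so a_k and a_(k+l) have disjoint supports.
   Coordinatewise this forces a_1 = 0, contradicting |a_1|^2 = |p_1|^2 = 2. *)

Section Gram.
Variable R : realType.

Lemma dotvDl m (u v w : 'rV[R]_m) : dotv (u + v) w = dotv u w + dotv v w.
Proof. by rewrite /dotv -big_split; apply: eq_bigr => i _; rewrite mxE mulrDl. Qed.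

Lemma dotvZl m c (u w : 'rV[R]_m) : dotv (c *: u) w = c * dotv u w.
Proof. by rewrite /dotv mulr_sumr; apply: eq_bigr => i _; rewrite mxE mulrA. Qed.

Lemma dotv0l m (w : 'rV[R]_m) : dotv 0 w = 0.
Proof. by rewrite /dotv big1 // => i _; rewrite mxE mul0r. Qed.

Lemma dotvC m (u w : 'rV[R]_m) : dotv u w = dotv w u.
Proof. by apply: eq_bigr => i _; rewrite mulrC. Qed.

Lemma dotvv_eq0 m (u : 'rV[R]_m) : dotv u u = 0 -> u = 0.
Proof.
move=> /eqP; rewrite psumr_eq0 => [/allP uu0|i _]; last by rewrite -expr2 sqr_ge0.
apply/rowP => j; rewrite mxE; apply/eqP.
by have /implyP/(_ isT) := uu0 j (mem_index_enum j); rewrite mulf_eq0 orbb.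
Qed.

Lemma dotv_nneg_eq0 m (u v : 'rV[R]_m) :
  (forall r, 0 <= u 0 r) -> (forall r, 0 <= v 0 r) ->
  dotv u v = 0 -> forall r, u 0 r * v 0 r = 0.
Proof.
move=> u_ge0 v_ge0 /eqP; rewrite psumr_eq0 => [/allP uv0 r|i _]; last exact: mulr_ge0.
by apply/eqP; have /implyP/(_ isT) := uv0 r (mem_index_enum r).
Qed.

Definition lincomb n m (a : 'I_n -> 'rV[R]_m) (s : seq (R * 'I_n)) : 'rV[R]_m :=
  \sum_(x <- s) x.1 *: a x.2.

Lemma dotv_lincombl n m (a : 'I_n -> 'rV[R]_m) s w :
  dotv (lincomb a s) w = \sum_(x <- s) x.1 * dotv (a x.2) w.
Proof.
elim: s => [|x s IHs]; first by rewrite /lincomb !big_nil dotv0l.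
by rewrite /lincomb !big_cons dotvDl dotvZl -/(lincomb a s) IHs.
Qed.

Lemma dotv_lincomb n m (a : 'I_n -> 'rV[R]_m) s t :
  dotv (lincomb a s) (lincomb a t) =
  \sum_(x <- s) \sum_(y <- t) x.1 * y.1 * dotv (a x.2) (a y.2).
Proof.
rewrite dotv_lincombl; apply: eq_bigr => x _; rewrite dotvC dotv_lincombl mulr_sumr.
by apply: eq_bigr => y _; rewrite mulrA [dotv (a y.2) _]dotvC.
Qed.

Lemma lincomb_cat_opp n m (a : 'I_n -> 'rV[R]_m) s t :
  lincomb a (s ++ [seq (- x.1, x.2) | x <- t]) = lincomb a s - lincomb a t.
Proof.
rewrite /lincomb big_cat big_map /= -sumrN; congr (_ + _).
by apply: eq_bigr => x _; rewrite scaleNr.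
Qed.

Section SameGram.
Variables (n m m' : nat) (a : 'I_n -> 'rV[R]_m) (b : 'I_n -> 'rV[R]_m').
Hypothesis gram_ab : forall i j, dotv (a i) (a j) = dotv (b i) (b j).

Lemma gram_dotv_lincomb s t :
  dotv (lincomb a s) (lincomb a t) = dotv (lincomb b s) (lincomb b t).
Proof.
by rewrite !dotv_lincomb; apply: eq_bigr => x _; apply: eq_bigr => y _; rewrite gram_ab.
Qed.

Lemma gram_lincomb_eq s t : lincomb b s = lincomb b t -> lincomb a s = lincomb a t.
Proof.
move=> bst; apply/eqP; rewrite -subr_eq0 -lincomb_cat_opp; apply/eqP/dotvv_eq0.
by rewrite gram_dotv_lincomb lincomb_cat_opp bst subrr dotv0l.
Qed.

End SameGram.

End Gram.

(* Each of x0, x2 is 0 or S := x1 + y1, whereas (1 + c) x1 + (1 - c) y1 is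
   (1 + c) S or (1 - c) S. *)
Lemma disjoint_pairs_sum_eq0 (R : realDomainType) (c x0 y0 x1 y1 x2 y2 : R) :
  0 < c < 1 ->
  0 <= x0 -> 0 <= y0 -> 0 <= x1 -> 0 <= y1 -> 0 <= x2 -> 0 <= y2 ->
  x0 * y0 = 0 -> x1 * y1 = 0 -> x2 * y2 = 0 ->
  x0 + y0 = x1 + y1 -> x2 + y2 = x1 + y1 ->
  x0 + x2 = (1 + c) * x1 + (1 - c) * y1 -> x1 + y1 = 0.
Proof.
move=> /andP[c_gt0 c_lt1] + + + + + + /eqP + /eqP + /eqP.
rewrite !mulf_eq0 => ? ? ? ? ? ? /orP[] /eqP-> /orP[] /eqP-> /orP[] /eqP->; nra.
Qed.

Lemma gram_not_cp (R : realType) n m (p : 'I_n -> 'rV[R]_m) (c : R)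
    (i0 i1 i2 j0 j1 j2 : 'I_n) :
  0 < c < 1 ->
  dotv (p i0) (p j0) = 0 -> dotv (p i1) (p j1) = 0 -> dotv (p i2) (p j2) = 0 ->
  p i0 + p j0 = p i1 + p j1 -> p i2 + p j2 = p i1 + p j1 ->
  p i0 + p i2 = (1 + c) *: p i1 + (1 - c) *: p j1 ->
  p i1 != 0 ->
  ~ completely_positive (\matrix_(i, j) dotv (p i) (p j)).
Proof.
move=> c01 p0_orth p1_orth p2_orth p01 p21 p012 p1_neq0 [k [a [a_ge0 Xa]]].
have gram_ap i j : dotv (a i) (a j) = dotv (p i) (p j) by rewrite -Xa mxE.
have lincomb2 f (x y : R * 'I_n) :
    lincomb f [:: x; y] = x.1 *: f x.2 + y.1 *: f y.2.
  by rewrite /lincomb !big_cons big_nil addr0.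
have a01 : a i0 + a j0 = a i1 + a j1.
  have := gram_lincomb_eq gram_ap (s := [:: (1, i0); (1, j0)])
    (t := [:: (1, i1); (1, j1)]).
  by rewrite !lincomb2 /= !scale1r; apply.
have a21 : a i2 + a j2 = a i1 + a j1.
  have := gram_lincomb_eq gram_ap (s := [:: (1, i2); (1, j2)])
    (t := [:: (1, i1); (1, j1)]).
  by rewrite !lincomb2 /= !scale1r; apply.
have a012 : a i0 + a i2 = (1 + c) *: a i1 + (1 - c) *: a j1.
  have := gram_lincomb_eq gram_ap (s := [:: (1, i0); (1, i2)])
    (t := [:: (1 + c, i1); (1 - c, j1)]).
  by rewrite !lincomb2 /= !scale1r; apply.
have a_disj i j : dotv (p i) (p j) = 0 -> forall r, a i 0 r * a j 0 r = 0.
  by move=> pij0; apply: dotv_nneg_eq0 => //; rewrite gram_ap.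
have a1_eq0 : a i1 = 0.
  apply/rowP => r; rewrite mxE.
  suff /eqP : a i1 0 r + a j1 0 r = 0 by rewrite paddr_eq0 // => /andP[/eqP].
  move: a01 a21 a012 => /rowP/(_ r) + /rowP/(_ r) + /rowP/(_ r); rewrite !mxE.
  exact: disjoint_pairs_sum_eq0 (a_disj _ _ p0_orth r) (a_disj _ _ p1_orth r)
    (a_disj _ _ p2_orth r).
by move/eqP: p1_neq0; apply; apply/dotvv_eq0; rewrite -gram_ap a1_eq0 dotv0l.
Qed.

Lemma quad2_ge0 (R : realDomainType) (a b d x y : R) :
  0 <= a -> 0 <= d -> b ^+ 2 <= a * d -> 0 <= a * x ^+ 2 + 2 * b * x * y + d * y ^+ 2.
Proof.
rewrite le0r => /orP[/eqP-> d_ge0|a_gt0 d_ge0 bad].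
  rewrite mul0r => b2_le0.
  have -> : b = 0 by apply/eqP; rewrite -sqrf_eq0 eq_le b2_le0 sqr_ge0.
  nra.
rewrite -(pmulr_rge0 _ a_gt0).
have -> : a * (a * x ^+ 2 + 2 * b * x * y + d * y ^+ 2) =
    (a * x + b * y) ^+ 2 + (a * d - b ^+ 2) * y ^+ 2 by ring.
by rewrite addr_ge0 ?sqr_ge0 // mulr_ge0 ?sqr_ge0 // subr_ge0.
Qed.

Definition symmx2 (R : nzRingType) (a b d : R) : 'M[R]_2 :=
  \matrix_(i, j) nth 0 (nth [::] [:: [:: a; b]; [:: b; d]] i) j.

Lemma herm_psd_symmx2 (R : rcfType) (a b d : R) :
  0 <= a -> 0 <= d -> b ^+ 2 <= a * d -> herm_psd (map_mx (real_complex R) (symmx2 a b d)).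
Proof.
move=> a_ge0 d_ge0 bad; split.
  apply/matrixP => i j; rewrite !mxE.
  by case: i => [[|[|i]] hi]; case: j => [[|[|j]] hj]; rewrite //=; apply: conjc_real.
move=> v; rewrite !mxE !big_ord_recl big_ord0 /= !mxE !big_ord_recl !big_ord0 /= !mxE /=.
case: (v ord0 ord0) => x1 y1; case: (v (lift ord0 ord0) ord0) => x2 y2.
rewrite /real_complex_def; simpc; apply/andP; split; first by apply/eqP; ring.
have := quad2_ge0 x1 x2 a_ge0 d_ge0 bad; have := quad2_ge0 y1 y2 a_ge0 d_ge0 bad.
lra.
Qed.

Section Spin.
Variable R : rcfType.

Definition spin2 (x0 x1 x2 : R) : 'M[R]_2 :=
  symmx2 ((x0 + x2) / Num.sqrt 2) (x1 / Num.sqrt 2) ((x0 - x2) / Num.sqrt 2).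

Lemma spin2_psd (x0 x1 x2 : R) :
  Num.sqrt (x1 ^+ 2 + x2 ^+ 2) <= x0 -> herm_psd (map_mx (real_complex R) (spin2 x0 x1 x2)).
Proof.
move=> cone; have s_ge0 : 0 <= x1 ^+ 2 + x2 ^+ 2 by rewrite addr_ge0 ?sqr_ge0.
have [x0_ge0 s_le] : 0 <= x0 /\ x1 ^+ 2 + x2 ^+ 2 <= x0 ^+ 2.
  have := sqr_sqrtr s_ge0; have := sqrtr_ge0 (x1 ^+ 2 + x2 ^+ 2).
  move: (Num.sqrt _) cone => t; nra.
have h_ge0 : 0 <= (Num.sqrt 2 : R)^-1 by rewrite invr_ge0 sqrtr_ge0.
rewrite /spin2; move: (Num.sqrt 2)^-1 h_ge0 => h h_ge0.
have [x0x2_ge0 x0x2'_ge0] : 0 <= x0 + x2 /\ 0 <= x0 - x2 by split; nra.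
apply: herm_psd_symmx2; rewrite ?mulr_ge0 //.
rewrite -subr_ge0.
have -> : (x0 + x2) * h * ((x0 - x2) * h) - (x1 * h) ^+ 2 =
    h ^+ 2 * (x0 ^+ 2 - (x1 ^+ 2 + x2 ^+ 2)) by ring.
by rewrite mulr_ge0 ?sqr_ge0 // subr_ge0.
Qed.

Lemma mxtrace_spin2 (x0 x1 x2 y0 y1 y2 : R) :
  \tr (spin2 x0 x1 x2 *m spin2 y0 y1 y2) = x0 * y0 + x1 * y1 + x2 * y2.
Proof.
rewrite /mxtrace !big_ord_recl !big_ord0 !mxE !big_ord_recl !big_ord0 !mxE /=.
have h2 : (Num.sqrt 2)^-1 * (Num.sqrt 2)^-1 = 2^-1 :> R.
  by rewrite -invfM -expr2 sqr_sqrtr // ler0n.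
move: (Num.sqrt 2)^-1 h2 => h h2.
transitivity ((h * h) * (2 * (x0 * y0 + x1 * y1 + x2 * y2))); first ring.
by rewrite h2 mulrA mulVf ?mul1r // pnatr_eq0.
Qed.

End Spin.

Lemma gram_lorentz3_cpsd (R : realType) n (a : 'I_n -> 'rV[R]_3) :
  (forall i, lorentz_cone (a i)) -> cpsd (\matrix_(i, j) dotv (a i) (a j)).
Proof.
move=> a_cone; exists 2%N.
exists (fun i => map_mx (real_complex R)
  (spin2 (a i 0 ord0) (a i 0 (lift ord0 ord0)) (a i 0 (lift ord0 (lift ord0 ord0))))).
split=> //; split=> [i|i j].
  by apply: spin2_psd; have := a_cone i; rewrite /lorentz_cone !big_ord_recl big_ord0 addr0.
by rewrite -map_mxM trace_map_mx mxtrace_spin2 mxE /dotv !big_ord_recl big_ord0 addr0 addrA.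
Qed.

Section Polygon.
Variable R : realType.

Lemma pk_lorentz n (k : 'I_n) : lorentz_cone (pk R k).
Proof. by rewrite /lorentz_cone !big_ord_recl big_ord0 !mxE /= addr0 cos2Dsin2 sqrtr1. Qed.

Lemma gram_lorentz_Xmat n : gram_lorentz (Xmat R n).
Proof. by exists 2%N, (@pk R n); split=> [|i j]; [exact: pk_lorentz | rewrite mxE]. Qed.

Lemma cpsd_Xmat n : cpsd (Xmat R n).
Proof. exact: gram_lorentz3_cpsd (@pk_lorentz n). Qed.

Lemma pk_neq0 n (k : 'I_n) : pk R k != 0.
Proof. by apply/negP => /eqP/rowP/(_ ord0); rewrite !mxE /=; apply/eqP; rewrite oner_eq0. Qed.

Variable l : nat.
Local Notation theta := (pi / l%:R : R).

Lemma pkE (k : 'I_(2 * l)) j :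
  pk R k 0 j = [:: 1; cos (k%:R * theta); sin (k%:R * theta)]`_j.
Proof.
have l_gt0 : (0 < l)%N by have := ltn_ord k; lia.
rewrite mxE natrM; congr [:: _; cos _; sin _]`_j; field; by rewrite pnatr_eq0 -lt0n.
Qed.

Lemma pk_antipodeE (i j : 'I_(2 * l)) r : j = (i + l)%N :> nat ->
  pk R j 0 r = [:: 1; - cos (i%:R * theta); - sin (i%:R * theta)]`_r.
Proof.
have l_gt0 : (0 < l)%N by have := ltn_ord i; lia.
move=> ji; rewrite pkE ji natrD mulrDl [l%:R * _]mulrC divfK ?pnatr_eq0 -?lt0n //.
by rewrite cosDpi sinDpi.
Qed.

Lemma dotv_pk_antipode (i j : 'I_(2 * l)) :
  j = (i + l)%N :> nat -> dotv (pk R i) (pk R j) = 0.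
Proof.
move=> ji; rewrite /dotv !big_ord_recl big_ord0 !(pk_antipodeE _ ji) !pkE /=.
have := cos2Dsin2 (i%:R * theta); lra.
Qed.

Lemma pk_add_antipode (i j i' j' : 'I_(2 * l)) :
  j = (i + l)%N :> nat -> j' = (i' + l)%N :> nat -> pk R i + pk R j = pk R i' + pk R j'.
Proof.
move=> ji j'i'; apply/rowP => r; rewrite [LHS]mxE [RHS]mxE.
rewrite (pk_antipodeE _ ji) (pk_antipodeE _ j'i') !pkE.
by case: r => [[|[|[|r]]] ?] //=; rewrite !subrr.
Qed.

Lemma pk_add_neighbours (i0 i1 i2 j1 : 'I_(2 * l)) :
  i1 = i0.+1 :> nat -> i2 = i1.+1 :> nat -> j1 = (i1 + l)%N :> nat ->
  pk R i0 + pk R i2 = (1 + cos theta) *: pk R i1 + (1 - cos theta) *: pk R j1.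
Proof.
move=> i10 i21 j11; apply/rowP => r.
rewrite [LHS]mxE [RHS]mxE [(_ *: pk R i1) 0 r]mxE [(_ *: pk R j1) 0 r]mxE.
rewrite (pk_antipodeE _ j11) !pkE i21.
have -> : i0%:R * theta = i1%:R * theta - theta.
  by rewrite i10 -(natr1 i0) (mulrDl _ 1) mul1r addrK.
rewrite -(natr1 i1) (mulrDl _ 1) mul1r; set a := i1%:R * theta.
case: r => [[|[|[|r]]] ?] //=; rewrite ?cosD ?sinD ?cosN ?sinN; lra.
Qed.

Lemma Xmat_not_cp : (3 <= l)%N -> ~ completely_positive (Xmat R (2 * l)).
Proof.
move=> l_ge3; have pi_gt0 := pi_gt0 R.
have theta_gt0 : 0 < theta by rewrite divr_gt0 // ltr0n; lia.
have l_ge3R : 3 <= l%:R :> R by rewrite ler_nat.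
have theta_lt : theta < pi / 2 by rewrite ltr_pdivrMr; nra.
have cos_gt0 : 0 < cos theta by apply: cos_gt0_pihalf; lra.
have sin_gt0 : 0 < sin theta by apply: sin_gt0_pi; lra.
have cos_lt1 : cos theta < 1 by have := cos2Dsin2 theta; nra.
pose i0 := @Ordinal (2 * l) 0 ltac:(lia).
pose i1 := @Ordinal (2 * l) 1 ltac:(lia).
pose i2 := @Ordinal (2 * l) 2 ltac:(lia).
pose j0 := @Ordinal (2 * l) l ltac:(lia).
pose j1 := @Ordinal (2 * l) l.+1 ltac:(lia).
pose j2 := @Ordinal (2 * l) l.+2 ltac:(lia).
apply: (@gram_not_cp _ _ _ (@pk R _) (cos theta) i0 i1 i2 j0 j1 j2).
- by rewrite cos_gt0 cos_lt1.
- exact: dotv_pk_antipode.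
- exact: dotv_pk_antipode.
- exact: dotv_pk_antipode.
- exact: pk_add_antipode.
- exact: pk_add_antipode.
- exact: pk_add_neighbours.
- exact: pk_neq0.
Qed.
End Polygon.

Theorem corollary4p11 (R : realType) (l : nat) (hl : (3 <= l)%N) (hodd : odd l) :
  gram_lorentz (Xmat R (2 * l)) /\ ~ completely_positive (Xmat R (2 * l)) /\
  cpsd (Xmat R (2 * l)).
Proof.
split; first exact: gram_lorentz_Xmat.
split; first exact: Xmat_not_cp.
exact: cpsd_Xmat.
Qed.
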